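(* Let $M=(S,\Sigma,\delta,s_0,F)$ be a deterministic finite automaton, let $T\ge 1$ be an integer, and for each $s\in S$ let $P(\cdot\mid s)$ and $Q(\cdot\mid s)$ be probability distributions on $\Sigma$. Define distributions $P$ and $Q$ on $\Sigma^T$ by $P(x)=\prod_{t=1}^T P(\sigma_t\mid s_t)$ and $Q(x)=\prod_{t=1}^T Q(\sigma_t\mid s_t)$ for $x=\sigma_1\cdots\sigma_T$, where $s_1\cdots s_{T+1}$ is the state sequence induced by $x$, and let $f^*(x)=\mathbb{1}(s_{T+1}\in F)$. Define $P_t$ on $S$ by $P_1(s')=\mathbb{1}(s'=s_0)$ and $P_t(s')=\mathbb{P}_{s\sim P_{t-1},\sigma\sim P(\cdot\mid s)}[s'=\delta(s,\sigma)]$ for $t\ge2$, and $P_t(s,\sigma)=P_t(s)P(\sigma\mid s)$; define $Q_t(s)$ and $Q_t(s,\sigma)$ analogously using $Q(\cdot\mid s)$. Let $\hat g:S\times\Sigma\to S$ and $\hat h:S\to\{0,1\}$ be arbitrary functions, and define $\hat f:\Sigma^T\to\{0,1\}$ by $\hat f(\sigma_1\cdots\sigma_T)=\hat h(\hat s_{T+1})$, where $\hat s_1=s_0$ and $\hat s_{t+1}=\hat g(\hat s_t,\sigma_t)$. Let $\tilde L_P(\hat f)=\sum_{t=1}^T L_{P_t}(\hat g)+L_{P_{T+1}}(\hat h)$. Then $$L_Q(\hat f)\le \tilde L_P(\hat f)+\sum_{t=1}^T\mathrm{TV}(P_t(s,\sigma),Q_t(s,\sigma))+\mathrm{TV}(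P_{T+1}(s),Q_{T+1}(s)).$$
   Context: A deterministic finite automaton $M=(S,\Sigma,\delta,s_0,F)$ has a finite state set $S$, a finite alphabet $\Sigma$, a transition function $\delta:S\times\Sigma\to S$, an initial state $s_0\in S$ and final states $F\subseteq S$. For $x=\sigma_1\cdots\sigma_T$, the induced state sequence is $s_1=s_0$, $s_{t+1}=\delta(s_t,\sigma_t)$. Losses: $L_Q(\hat f)=\mathbb{P}_{x\sim Q}[\hat f(x)\neq f^*(x)]$; $L_{P_t}(\hat g)=\mathbb{P}_{(s,\sigma)\sim P_t(s,\sigma)}[\hat g(s,\sigma)\neq\delta(s,\sigma)]$; $L_{P_{T+1}}(\hat h)=\mathbb{P}_{s\sim P_{T+1}}[\hat h(s)\neq\mathbb{1}(s\in F)]$. The total variation distance is defined without the factor $1/2$: $\mathrm{TV}(\mu,\nu)=\sum_a|\mu(a)-\nu(a)|$. *)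

From mathcomp Require Import all_boot all_order all_algebra.
Set Implicit Arguments. Unset Strict Implicit. Unset Printing Implicit Defensive.
Import Order.TTheory GRing.Theory Num.Theory.
Local Open Scope ring_scope.

Section DFA.
Variables (R : realFieldType) (S Sigma : finType).

Definition run (g : S -> Sigma -> S) (s : S) (x : seq Sigma) : S := foldl g s x.

Fixpoint word_prob (P : S -> Sigma -> R) (delta : S -> Sigma -> S) (s : S)
    (x : seq Sigma) : R :=
  match x with
  | [::] => 1
  | a :: x' => P s a * word_prob P delta (delta s a) x'
  end.

Definition step_dist (P : S -> Sigma -> R) (delta : S -> Sigma -> S)
    (mu : S -> R) (s' : S) : R :=
  \sum_(s : S) \sum_(a : Sigma) mu s * P s a * (s' == delta s a)%:R.

(* statedist n = distribution after n steps; P_t = statedist (t-1). *)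
Fixpoint statedist (P : S -> Sigma -> R) (delta : S -> Sigma -> S) (s0 : S)
    (n : nat) : S -> R :=
  match n with
  | 0 => fun s' => (s' == s0)%:R
  | n'.+1 => step_dist P delta (statedist P delta s0 n')
  end.

Definition Pt (P : S -> Sigma -> R) (delta : S -> Sigma -> S) (s0 : S)
    (t : nat) : S -> R := statedist P delta s0 t.-1.

Definition Pt_joint (P : S -> Sigma -> R) (delta : S -> Sigma -> S) (s0 : S)
    (t : nat) (s : S) (a : Sigma) : R := Pt P delta s0 t s * P s a.

Definition loss_trans (P : S -> Sigma -> R) (delta : S -> Sigma -> S) (s0 : S)
    (t : nat) (ghat : S -> Sigma -> S) : R :=
  \sum_(s : S) \sum_(a : Sigma) Pt_joint P delta s0 t s a * (ghat s a != delta s a)%:R.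

Definition loss_final (P : S -> Sigma -> R) (delta : S -> Sigma -> S) (s0 : S)
    (t : nat) (F : {set S}) (hhat : S -> bool) : R :=
  \sum_(s : S) Pt P delta s0 t s * (hhat s != (s \in F))%:R.

(* TV without the factor 1/2. *)
Definition TV_joint (P Q : S -> Sigma -> R) (delta : S -> Sigma -> S) (s0 : S)
    (t : nat) : R :=
  \sum_(s : S) \sum_(a : Sigma) `|Pt_joint P delta s0 t s a - Pt_joint Q delta s0 t s a|.

Definition TV_state (P Q : S -> Sigma -> R) (delta : S -> Sigma -> S) (s0 : S)
    (t : nat) : R :=
  \sum_(s : S) `|Pt P delta s0 t s - Pt Q delta s0 t s|.

Definition loss_word (T : nat) (Q : S -> Sigma -> R) (delta : S -> Sigma -> S)
    (s0 : S) (fhat fstar : T.-tuple Sigma -> bool) : R :=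
  \sum_(x : T.-tuple Sigma) word_prob Q delta s0 x * (fhat x != fstar x)%:R.

End DFA.

(* On a word x, if every transition ghat (s_t, sigma_t) agrees with delta then
   the hypothesis run follows the true run, so the 0/1 error of fhat on x is at
   most the number of wrong transitions plus the final error of hhat.  Taking
   the expectation under Q and splitting it along time turns this path bound
   into a sum of per-step losses under the state marginals Q_t; finally a loss
   is the expectation of a [0,1]-valued function, so replacing Q_t by P_t
   costs at most their total variation distance. *)

From mathcomp Require Import all_boot all_order all_algebra.
From mathcomp Require Import ring.
Import Order.TTheory GRing.Theory Num.Theory.
Local Open Scope ring_scope.
Set Implicit Arguments. Unset Strict Implicit.

Section TupleSums.
Variables (R : nmodType) (Sigma : finType).

Lemma sum_tuple0 (G : seq Sigma -> R) : \sum_(x : 0.-tuple Sigma) G x = G [::].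
Proof. by rewrite (big_pred1 [tuple]) // => x; rewrite [x]tuple0; apply/esym/eqP. Qed.

Lemma sum_tupleS n (G : seq Sigma -> R) :
  \sum_(x : n.+1.-tuple Sigma) G x = \sum_(a : Sigma) \sum_(x : n.-tuple Sigma) G (a :: x).
Proof.
rewrite pair_big (reindex (fun p : Sigma * n.-tuple Sigma => [tuple of p.1 :: p.2])) /=.
  by apply: eq_bigr => -[a x].
exists (fun x : n.+1.-tuple Sigma => (thead x, [tuple of behead x])).
  by move=> [a x] _; congr pair; apply: val_inj.
by move=> x _; apply: val_inj => /=; rewrite [in RHS](tuple_eta x).
Qed.

End TupleSums.

Section PathExpectation.
Variables (R : realFieldType) (S Sigma : finType).
Variables (P : S -> Sigma -> R) (delta : S -> Sigma -> S).

Lemma word_prob_ge0 (P_ge0 : forall s a, 0 <= P s a) s x :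
  0 <= word_prob P delta s x.
Proof. by elim: x s => //= a x IHx s; rewrite mulr_ge0. Qed.

Hypothesis P_sum1 : forall s, \sum_a P s a = 1.

Lemma sum_word_prob n s : \sum_(x : n.-tuple Sigma) word_prob P delta s x = 1.
Proof.
elim: n s => [|n IHn] s; first by rewrite sum_tuple0.
rewrite (sum_tupleS _ (word_prob P delta s)) /=.
under eq_bigr => a _ do rewrite -mulr_sumr IHn mulr1.
exact: P_sum1.
Qed.

Lemma sum_step_dist mu (G : S -> R) :
  \sum_s' step_dist P delta mu s' * G s' = \sum_s \sum_a mu s * P s a * G (delta s a).
Proof.
under eq_bigr do rewrite mulr_suml.
rewrite exchange_big; apply: eq_bigr => s _.
under eq_bigr do rewrite mulr_suml.
rewrite exchange_big; apply: eq_bigr => a _.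
rewrite (bigD1 (delta s a)) //= eqxx mulr1 big1 ?addr0 // => s' /negPf ->.
by rewrite mulr0 mul0r.
Qed.

Lemma iter_step_dist s0 n :
  iter n (step_dist P delta) (fun s => (s == s0)%:R) = statedist P delta s0 n.
Proof. by elim: n => //= n ->. Qed.

Fixpoint path_cost (err : S -> Sigma -> R) (fin : S -> R) (s : S) (x : seq Sigma) : R :=
  if x is a :: x' then err s a + path_cost err fin (delta s a) x' else fin s.

Lemma path_cost_ge0 err fin :
  (forall s a, 0 <= err s a) -> (forall s, 0 <= fin s) ->
  forall s x, 0 <= path_cost err fin s x.
Proof. by move=> err_ge0 fin_ge0 s x; elim: x s => //= a x IHx s; rewrite addr_ge0. Qed.

Variables (err : S -> Sigma -> R) (fin : S -> R).

Let expected_cost n s :=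
  \sum_(x : n.-tuple Sigma) word_prob P delta s x * path_cost err fin s x.

Lemma expected_costS n s :
  expected_cost n.+1 s =
  \sum_a P s a * err s a + \sum_a P s a * expected_cost n (delta s a).
Proof.
rewrite /expected_cost (sum_tupleS _ (fun x => word_prob P delta s x * path_cost err fin s x)).
rewrite -big_split; apply: eq_bigr => a _ /=.
rewrite mulr_sumr -[P s a * err s a]mulr1 -(sum_word_prob n (delta s a)).
rewrite !mulr_sumr -big_split; apply: eq_bigr => x _ /=; ring.
Qed.

Lemma expected_path_cost n (mu : S -> R) :
  \sum_s mu s * expected_cost n s
  = \sum_(t < n) \sum_s \sum_a iter t (step_dist P delta) mu s * P s a * err s a
    + \sum_s iter n (step_dist P delta) mu s * fin s.
Proof.
elim: n mu => [|n IHn] mu.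
  rewrite big_ord0 add0r; apply: eq_bigr => s _.
  rewrite /expected_cost.
  by rewrite (sum_tuple0 (fun x => word_prob P delta s x * path_cost err fin s x)) mul1r.
have -> : \sum_s mu s * expected_cost n.+1 s
    = \sum_s \sum_a mu s * P s a * err s a
      + \sum_s' step_dist P delta mu s' * expected_cost n s'.
  rewrite sum_step_dist -big_split; apply: eq_bigr => s _.
  rewrite expected_costS mulrDr !mulr_sumr.
  by congr (_ + _); apply: eq_bigr => a _; rewrite !mulrA.
rewrite IHn big_ord_recl addrA /= -iterSr; congr (_ + _ + _).
by apply: eq_bigr => t _; rewrite -iterSr.
Qed.

End PathExpectation.

Lemma mismatch_le_path_cost (R : realFieldType) (S Sigma : finType)
    (g delta : S -> Sigma -> S) (h f : S -> bool) s (x : seq Sigma) :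
  (h (foldl g s x) != f (foldl delta s x))%:R
    <= path_cost delta (fun u a => (g u a != delta u a)%:R) (fun u => (h u != f u)%:R) s x
    :> R.
Proof.
elim: x s => [|a x IHx] s //=.
have [-> | _] := eqVneq (g s a) (delta s a); first by rewrite add0r.
by apply: (@le_trans _ _ 1); [rewrite lern1 leq_b1 | rewrite lerDl path_cost_ge0].
Qed.

Lemma mul_indicator_le_dist (R : realDomainType) (p q : R) (b : bool) :
  q * b%:R <= p * b%:R + `|p - q|.
Proof.
case: b; rewrite ?mulr1 ?mulr0 ?add0r //.
by rewrite -lerBlDl distrC ler_norm.
Qed.

Section Losses.
Variables (R : realFieldType) (S Sigma : finType) (delta : S -> Sigma -> S) (s0 : S).

Lemma loss_word_le_surrogate (Q : S -> Sigma -> R)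
    (Q_ge0 : forall s a, 0 <= Q s a) (Q_sum1 : forall s, \sum_a Q s a = 1)
    (T : nat) (F : {set S}) (ghat : S -> Sigma -> S) (hhat : S -> bool) :
  loss_word Q delta s0 (fun x : T.-tuple Sigma => hhat (run ghat s0 x))
    (fun x : T.-tuple Sigma => run delta s0 x \in F)
  <= \sum_(1 <= t < T.+1) loss_trans Q delta s0 t ghat + loss_final Q delta s0 T.+1 F hhat.
Proof.
set err := fun s a => (ghat s a != delta s a)%:R : R.
set fin := fun s => (hhat s != (s \in F))%:R : R.
apply: (@le_trans _ _ (\sum_s (s == s0)%:R *
   \sum_(x : T.-tuple Sigma) word_prob Q delta s x * path_cost delta err fin s x)).
  rewrite (bigD1 s0) //= eqxx mul1r [X in _ + X]big1 ?addr0; last first.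
    by move=> s /negPf ->; rewrite mul0r.
  apply: ler_sum => x _; apply: ler_wpM2l; first exact: word_prob_ge0.
  exact: mismatch_le_path_cost.
rewrite expected_path_cost // iter_step_dist big_add1 big_mkord.
by under eq_bigr => t _ do rewrite iter_step_dist.
Qed.

Variables (P Q : S -> Sigma -> R).

Lemma loss_trans_le_TV t (g : S -> Sigma -> S) :
  loss_trans Q delta s0 t g <= loss_trans P delta s0 t g + TV_joint P Q delta s0 t.
Proof.
rewrite /loss_trans /TV_joint -big_split; apply: ler_sum => s _.
rewrite -big_split; apply: ler_sum => a _; exact: mul_indicator_le_dist.
Qed.

Lemma loss_final_le_TV t (F : {set S}) (h : S -> bool) :
  loss_final Q delta s0 t F h <= loss_final P delta s0 t F h + TV_state P Q delta s0 t.
Proof.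
rewrite /loss_final /TV_state -big_split; apply: ler_sum => s _.
exact: mul_indicator_le_dist.
Qed.

End Losses.

Theorem theorem4p7 (R : realFieldType) (S Sigma : finType)
    (delta : S -> Sigma -> S) (s0 : S) (F : {set S}) (T : nat) (hT : (1 <= T)%N)
    (P Q : S -> Sigma -> R)
    (P_ge0 : forall s a, 0 <= P s a) (P_sum1 : forall s, \sum_(a : Sigma) P s a = 1)
    (Q_ge0 : forall s a, 0 <= Q s a) (Q_sum1 : forall s, \sum_(a : Sigma) Q s a = 1)
    (ghat : S -> Sigma -> S) (hhat : S -> bool) :
  let fstar := fun x : T.-tuple Sigma => run delta s0 x \in F in
  let fhat := fun x : T.-tuple Sigma => hhat (run ghat s0 x) in
  let LtildeP := \sum_(1 <= t < T.+1) loss_trans P delta s0 t ghat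
                 + loss_final P delta s0 T.+1 F hhat in
  loss_word Q delta s0 fhat fstar
    <= LtildeP + \sum_(1 <= t < T.+1) TV_joint P Q delta s0 t
       + TV_state P Q delta s0 T.+1.
Proof.
cbv zeta.
apply: le_trans (loss_word_le_surrogate delta s0 Q_ge0 Q_sum1 T F ghat hhat) _.
rewrite -addrA addrACA -big_split /=.
apply: lerD; last exact: loss_final_le_TV.
by apply: ler_sum => t _; apply: loss_trans_le_TV.
Qed.
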